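(* Let $\Omega=(0,1)^2$, $N\ge2$, $h=1/N$, with grid points $(ih,jh)$, $0\le i,j\le N$; vectors $Z\in\mathbb{R}^{(N+1)^2}$ are indexed by grid points, $Z_I$ denotes the components at grid points in $\Omega$ and $Z_\partial$ those on $\partial\Omega$. Let $\mathcal{L}_h$ be the five-point operator $(\mathcal{L}_hZ)_{i,j}=-h^{-2}(z_{i-1,j}+z_{i+1,j}-4z_{i,j}+z_{i,j-1}+z_{i,j+1})$ at interior grid points. Let $\Omega=\Omega_1\cup\Omega_2$ be an overlapping decomposition into subdomains whose boundaries lie on grid lines; for $i=1,2$ let $Z_i,Z_{i,I},Z_{i,\partial}$ be the components of $Z$ at grid points of $\overline{\Omega_i}$, $\Omega_i$, $\partial\Omega_i$, and $\mathcal{L}_h^{(i)}$ the five-point operator at grid points of $\Omega_i$ acting on vectors indexed by grid points of $\overline{\Omega_i}$. Let $\alpha>0$, $F,Y_d\in\mathbb{R}^{(N+1)^2}$, and let $(Y,P)$ solve $$\mathcal{L}_hY=F_I-\alpha^{-1}h^{-2}P_I,\ Y_\partial=0;\qquad \mathcal{L}_h(h^{-2}P)=Y_I-Y_{d,I},\ P_\partial=0.$$ Given $Y^{(0)},P^{(0)}$ with $Y^{(0)}_\partial=P^{(0)}_\partial=0$, for $k=0,1,2,\dots$ and $i=1,2$ (in the order $i=1$ then $i=2$) define $Y^{(2k+i)},P^{(2k+i)}$ by $$\mathcal{L}_h^{(i)}Y^{(2k+i)}_i=F_{i,I}-\alpha^{-1}h^{-2}P^{(2k+i)}_{i,I},\qquad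 \mathcal{L}_h^{(i)}(h^{-2}P^{(2k+i)}_i)=Y^{(2k+i)}_{i,I}-Y_{d,i,I},$$ $Y^{(2k+i)}_{i,\partial}=Y^{(2k+i-1)}_{i,\partial}$, $P^{(2k+i)}_{i,\partial}=P^{(2k+i-1)}_{i,\partial}$, and $Y^{(2k+i)},P^{(2k+i)}$ equal to $Y^{(2k+i-1)},P^{(2k+i-1)}$ at all grid points not in $\Omega_i$. Define $E^{(j)}=(Y-Y^{(j)})^2+\alpha^{-1}h^{-4}(P-P^{(j)})^2$ (componentwise squares). Suppose the Schwarz alternating method for $\mathcal{L}_hW=0$, $W_\partial=0$ (namely $\mathcal{L}_h^{(i)}W^{(2k+i)}_i=0$, $W^{(2k+i)}_{i,\partial}=W^{(2k+i-1)}_{i,\partial}$, $W^{(2k+i)}=W^{(2k+i-1)}$ at grid points not in $\Omega_i$) is convergent with rate $\rho_{e,d}\in(0,1)$ under the maximum norm, i.e. $\max\{W^{(2k)}\}\le\rho_{e,d}\max\{W^{(2(k-1))}\}$ for $k\ge1$ and any initial guess. Then for $k=1,2,\dots$, $$\sum_{s=1}^{(N+1)^2}h^2\,(E^{(2k)})_s\le C\rho_{e,d}^k\max\{E^{(0)}\},$$ where $C>0$ is a constant independent of $h$, $\rho_{e,d}$ and $\alpha$.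
   Context: The $(Y,P)$ system is the discrete first-order optimality system (control eliminated) of the five-point finite difference discretization of minimizing $\frac12\|y-y_d\|_{L^2}^2+\frac\alpha2\|u\|_{L^2}^2$ subject to $-\Delta y=f+u$ in $(0,1)^2$, $y=0$ on the boundary. $\max\{\cdot\}$ denotes the maximum over all components. *)

From HB Require Import structures.
From mathcomp Require Import all_boot all_order all_algebra.
From mathcomp Require Import reals.
Set Implicit Arguments. Unset Strict Implicit. Unset Printing Implicit Defensive.
Import Order.TTheory GRing.Theory Num.Theory.
Local Open Scope ring_scope.

(* Grid points (i h, j h), 0 <= i, j <= N, indexed by pairs of ordinals. *)
Definition grid (N : nat) := ('I_N.+1 * 'I_N.+1)%type.

Definition interior (N : nat) (p : grid N) : bool :=
  ((0 < p.1)%N && (p.1 < N)%N) && ((0 < p.2)%N && (p.2 < N)%N).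

Section Defs.
Variable R : realType.

Definition hstep (N : nat) : R := (N%:R)^-1.

(* five-point operator (L_h Z)_{i,j}; only meaningful at interior points,
   where all four neighbours are grid points. *)
Definition lap5 (N : nat) (Z : grid N -> R) (p : grid N) : R :=
  - (hstep N)^-2 *
    (Z (inord p.1.-1, p.2) + Z (inord p.1.+1, p.2) - 4 * Z p
     + Z (p.1, inord p.2.-1) + Z (p.1, inord p.2.+1)).

Definition vmax (N : nat) (Z : grid N -> R) : R :=
  \big[Num.max/Z (ord0, ord0)]_(s : grid N) Z s.

Definition optsys (N : nat) (alpha : R) (F Yd Y P : grid N -> R) : Prop :=
  (forall p, interior p ->
     lap5 Y p = F p - alpha^-1 * (hstep N)^-2 * P p /\
     lap5 (fun q => (hstep N)^-2 * P q) p = Y p - Yd p) /\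
  (forall p, ~~ interior p -> Y p = 0 /\ P p = 0).

(* one Schwarz subdomain solve for the optimality system on the subdomain
   whose grid points (inside Omega_i) form the set S *)
Definition opt_step (N : nat) (alpha : R) (F Yd : grid N -> R)
  (S : {set grid N}) (Yold Pold Ynew Pnew : grid N -> R) : Prop :=
  (forall p, p \in S ->
     lap5 Ynew p = F p - alpha^-1 * (hstep N)^-2 * Pnew p /\
     lap5 (fun q => (hstep N)^-2 * Pnew q) p = Ynew p - Yd p) /\
  (forall p, p \notin S -> Ynew p = Yold p /\ Pnew p = Pold p).

Definition lap_step (N : nat) (S : {set grid N}) (Wold Wnew : grid N -> R) : Prop :=
  (forall p, p \in S -> lap5 Wnew p = 0) /\
  (forall p, p \notin S -> Wnew p = Wold p).

Definition schwarz_rate (N : nat) (S1 S2 : {set grid N}) (rho : R) : Prop :=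
  forall W : nat -> grid N -> R,
    (forall p, ~~ interior p -> W 0%N p = 0) ->
    (forall k : nat, lap_step S1 (W (2 * k)%N) (W (2 * k + 1)%N) /\
                     lap_step S2 (W (2 * k + 1)%N) (W (2 * k + 2)%N)) ->
    forall k : nat, (0 < k)%N -> vmax (W (2 * k)%N) <= rho * vmax (W (2 * (k - 1))%N).

Definition errE (N : nat) (alpha : R) (Y P Yj Pj : grid N -> R) (s : grid N) : R :=
  (Y s - Yj s) ^+ 2 + alpha^-1 * (hstep N)^-4 * (P s - Pj s) ^+ 2.

End Defs.

From HB Require Import structures.
From mathcomp Require Import all_boot all_order all_algebra.
From mathcomp Require Import reals.
From mathcomp Require Import ring lra.
From Stdlib Require Import IndefiniteDescription.
Import Order.TTheory GRing.Theory Num.Theory.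
Local Open Scope ring_scope.

Set Implicit Arguments.
Unset Strict Implicit.
Unset Printing Implicit Defensive.

(** The error E = (Y - Y^(j))^2 + alpha^-1 h^-4 (P - P^(j))^2 is discretely
  subharmonic at every point of the subdomain just solved: the five-point
  stencil of a square u^2 dominates 2 u (stencil u), and the error equations
  make the two cross terms cancel.  By the discrete maximum principle, E^(j) is
  therefore dominated by the Schwarz iterates W^(j) for L_h W = 0 started from
  W^(0) = E^(0); these exist because each subdomain Dirichlet problem is
  uniquely solvable, again by the maximum principle.  The assumed rate gives
  max W^(2k) <= rho^k max E^(0), and summing h^2 E over the (N+1)^2 grid
  points costs at most a factor (N+1)^2/N^2 <= 4. *)

Lemma sum_delta (F : pzSemiRingType) (T : finType) (a : T) (v : T -> F) :
  \sum_q (q == a)%:R * v q = v a.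
Proof. by under eq_bigr do rewrite mulr_natl mulrb; rewrite -big_mkcond big_pred1_eq. Qed.

Lemma square_system_solvable (F : fieldType) (T : finType) (c : T -> T -> F) :
  (forall v : T -> F, (forall p, \sum_q c p q * v q = 0) -> forall q, v q = 0) ->
  forall b : T -> F, exists v : T -> F, forall p, \sum_q c p q * v q = b p.
Proof.
move=> c_inj b.
pose A : 'M[F]_#|T| := \matrix_(i, j) c (enum_val j) (enum_val i).
pose row_of (v : T -> F) : 'rV[F]_#|T| := \row_i v (enum_val i).
pose fun_of (x : 'rV[F]_#|T|) (p : T) := x 0 (enum_rank p).
have row_ofK x : row_of (fun_of x) = x by apply/rowP => i; rewrite !mxE /fun_of enum_valK.
have mulA v p : (row_of v *m A) 0 (enum_rank p) = \sum_q c p q * v q.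
  rewrite !mxE [RHS](reindex _ (onW_bij _ (enum_val_bij T))).
  by apply: eq_bigr => i _; rewrite !mxE enum_rankK mulrC.
have A_unit : A \in unitmx.
  rewrite unitmxE unitfE; apply/negP => /det0P [x /eqP x_neq0 xA0]; apply: x_neq0.
  apply/rowP => i; rewrite mxE -[i]enum_valK.
  by apply: (c_inj (fun_of x)) => p; rewrite -mulA row_ofK xA0 mxE.
exists (fun_of (row_of b *m invmx A)) => p.
by rewrite -mulA row_ofK mulmxKV // mxE enum_rankK.
Qed.

Section FivePoint.
Variables (R : realType) (N : nat).
Implicit Types (v : grid N -> R) (S : {set grid N}) (p q : grid N).

Definition stencil5 v p : R :=
  v (inord p.1.-1, p.2) + v (inord p.1.+1, p.2) - 4 * v p
  + v (p.1, inord p.2.-1) + v (p.1, inord p.2.+1).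

Lemma lap5E v p : lap5 v p = - (hstep R N)^-2 * stencil5 v p.
Proof. by []. Qed.

Lemma hstep_gt0 : (0 < N)%N -> 0 < hstep R N.
Proof. by move=> N_gt0; rewrite invr_gt0 ltr0n. Qed.

Lemma lap5_eq0 v p : (0 < N)%N -> (lap5 v p == 0) = (stencil5 v p == 0).
Proof.
move=> N_gt0; rewrite lap5E mulf_eq0 oppr_eq0 invr_eq0 expf_eq0.
by rewrite gt_eqF ?hstep_gt0 ?andbF.
Qed.

Lemma stencil5_max_principle S v : {subset S <= @interior N} ->
  (forall p, p \notin S -> v p <= 0) -> (forall p, p \in S -> 0 <= stencil5 v p) ->
  forall p, v p <= 0.
Proof.
move=> S_int v_out v_in.
(* A positive maximum would propagate leftwards along its row up to the boundary. *)
pose m := [arg max_(p > (ord0, ord0)) v p]%O.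
have v_le_m q : v q <= v m by rewrite /m; case: arg_maxP => // ? _; apply.
suff : v m <= 0 by move=> vm_le0 p; apply: le_trans (v_le_m p) vm_le0.
rewrite leNgt; apply/negP => vm_gt0; clearbody m.
suff : forall n p, p.1 = n :> nat -> v p = v m -> False by apply.
elim=> [|n IH] p p1 vp; have pS : p \in S.
- by apply/negPn/negP => /v_out; rewrite vp leNgt vm_gt0.
- by have := S_int p pS; rewrite unfold_in /interior p1.
- by apply/negPn/negP => /v_out; rewrite vp leNgt vm_gt0.
apply: (IH (inord p.1.-1, p.2)).
  rewrite /= inordK; first by rewrite p1.
  exact: leq_ltn_trans (leq_pred _) (ltn_ord _).
have := v_in p pS; rewrite /stencil5 vp.
have := v_le_m (inord p.1.+1, p.2); have := v_le_m (p.1, inord p.2.-1).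
have := v_le_m (p.1, inord p.2.+1); have := v_le_m (inord p.1.-1, p.2).
lra.
Qed.

Lemma stencil5_dirichlet_eq0 S v : {subset S <= @interior N} ->
  (forall p, p \notin S -> v p = 0) -> (forall p, p \in S -> stencil5 v p = 0) ->
  forall p, v p = 0.
Proof.
move=> S_int v_out v_in p; apply/eqP; rewrite eq_le -oppr_le0.
apply/andP; split; [apply: (stencil5_max_principle S_int) |
                    apply: (stencil5_max_principle (v := fun q => - v q) S_int)] => q qS.
- by rewrite v_out.
- by rewrite v_in.
- by rewrite v_out ?oppr0.
- by move: (v_in q qS); rewrite /stencil5 => sv0; lra.
Qed.

Definition dirichlet_coef S p q : R :=
  if p \in S then
    (q == (inord p.1.-1, p.2))%:R + (q == (inord p.1.+1, p.2))%:R - 4 * (q == p)%:R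
    + (q == (p.1, inord p.2.-1))%:R + (q == (p.1, inord p.2.+1))%:R
  else (q == p)%:R.

Lemma sum_dirichlet_coef S v p :
  \sum_q dirichlet_coef S p q * v q = if p \in S then stencil5 v p else v p.
Proof.
rewrite /dirichlet_coef; case: ifP => _; last exact: sum_delta.
under eq_bigr do rewrite mulrDl mulrDl mulrBl mulrDl -mulrA.
by rewrite !big_split sumrN -mulr_sumr !sum_delta.
Qed.

Lemma lap_step_exists S : (0 < N)%N -> {subset S <= @interior N} ->
  forall Wold : grid N -> R, exists Wnew, lap_step S Wold Wnew.
Proof.
move=> N_gt0 S_int Wold.
have [|W solW] := square_system_solvable (c := dirichlet_coef S) _
  (fun p => if p \in S then 0 else Wold p).
  move=> v v0; apply: (stencil5_dirichlet_eq0 S_int) => p pS;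
  by have := v0 p; rewrite sum_dirichlet_coef ?pS ?(negbTE pS).
exists W; split=> p pS; have := solW p; rewrite sum_dirichlet_coef ?pS ?(negbTE pS) //.
by move=> W0; apply/eqP; rewrite lap5_eq0 // W0.
Qed.

Lemma stencil5_sqr_ge v p : 2 * v p * stencil5 v p <= stencil5 (fun q => v q ^+ 2) p.
Proof.
rewrite /stencil5 -subr_ge0.
set x := v p; set a := v (inord _, _); set b := v (inord _, _).
set c := v (_, inord _); set d := v (_, inord _).
have -> : a ^+ 2 + b ^+ 2 - 4 * x ^+ 2 + c ^+ 2 + d ^+ 2 - 2 * x * (a + b - 4 * x + c + d)
          = (a - x) ^+ 2 + (b - x) ^+ 2 + (c - x) ^+ 2 + (d - x) ^+ 2 by ring.
by rewrite !addr_ge0 ?sqr_ge0.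
Qed.

Lemma errE_subharmonic (alpha : R) (F Yd Y P Y' P' : grid N -> R) p :
  (0 < N)%N -> 0 < alpha ->
  lap5 Y p = F p - alpha^-1 * (hstep R N)^-2 * P p ->
  lap5 (fun q => (hstep R N)^-2 * P q) p = Y p - Yd p ->
  lap5 Y' p = F p - alpha^-1 * (hstep R N)^-2 * P' p ->
  lap5 (fun q => (hstep R N)^-2 * P' q) p = Y' p - Yd p ->
  0 <= stencil5 (errE alpha Y P Y' P') p.
Proof.
move=> N_gt0 alpha_gt0 eqY eqP eqY' eqP'.
rewrite !lap5E /stencil5 in eqY eqP eqY' eqP'.
have K4 : (hstep R N)^-4 = ((hstep R N)^-2) ^+ 2 by rewrite exprVn -exprM.
set K := (hstep R N)^-2 in eqY eqP eqY' eqP' K4.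
have K_gt0 : 0 < K by rewrite invr_gt0 exprn_gt0 ?hstep_gt0.
pose ey q := Y q - Y' q; pose ep q := P q - P' q.
have stencil_ey : stencil5 ey p = alpha^-1 * ep p.
  by apply: (mulfI (lt0r_neq0 K_gt0)); rewrite /stencil5 /ey /ep; lra.
have stencil_ep : K ^+ 2 * stencil5 ep p = - ey p.
  by rewrite /stencil5 /ey /ep; lra.
have -> : stencil5 (errE alpha Y P Y' P') p =
    stencil5 (fun q => ey q ^+ 2) p + alpha^-1 * K ^+ 2 * stencil5 (fun q => ep q ^+ 2) p.
  by rewrite /stencil5 /errE K4 /ey /ep; ring.
have cancel : 2 * ey p * stencil5 ey p + alpha^-1 * K ^+ 2 * (2 * ep p * stencil5 ep p) = 0.
  by rewrite stencil_ey -[ey p]opprK -stencil_ep; ring.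
rewrite -cancel lerD ?stencil5_sqr_ge // ler_wpM2l ?stencil5_sqr_ge //.
by rewrite mulr_ge0 ?exprn_ge0 ?ltW // invr_gt0.
Qed.

Lemma errE_ge0 (alpha : R) (Y P Y' P' : grid N -> R) :
  0 < alpha -> forall s, 0 <= errE alpha Y P Y' P' s.
Proof.
move=> alpha_gt0 s; have h_ge0 : 0 <= hstep R N by rewrite invr_ge0 ler0n.
rewrite /errE addr_ge0 ?sqr_ge0 // mulr_ge0 ?sqr_ge0 // mulr_ge0 ?invr_ge0 ?exprn_ge0 //.
exact: ltW.
Qed.

Lemma opt_step_errE S (alpha : R) (F Yd Y P Yo Po Yn Pn : grid N -> R) :
  (0 < N)%N -> 0 < alpha -> {subset S <= @interior N} ->
  optsys alpha F Yd Y P -> opt_step alpha F Yd S Yo Po Yn Pn ->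
  (forall p, p \notin S -> errE alpha Y P Yn Pn p = errE alpha Y P Yo Po p) /\
  (forall p, p \in S -> 0 <= stencil5 (errE alpha Y P Yn Pn) p).
Proof.
move=> N_gt0 alpha_gt0 S_int [eqYP _] [eqYPn unchanged]; split=> p pS.
  by rewrite /errE; have [-> ->] := unchanged p pS.
have [eqY eqP] := eqYP p (S_int p pS); have [eqYn eqPn] := eqYPn p pS.
exact: errE_subharmonic eqY eqP eqYn eqPn.
Qed.

Lemma subharmonic_le_lap_step S (E E' W W' : grid N -> R) :
  (0 < N)%N -> {subset S <= @interior N} ->
  (forall p, E p <= W p) -> (forall p, p \notin S -> E' p = E p) ->
  (forall p, p \in S -> 0 <= stencil5 E' p) -> lap_step S W W' ->
  forall p, E' p <= W' p.
Proof.
move=> N_gt0 S_int E_le_W E'_out E'_sub [W'_harm W'_out] p.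
rewrite -subr_le0; apply: (stencil5_max_principle (v := fun q => E' q - W' q) S_int) => q qS.
  by rewrite E'_out // W'_out // subr_le0.
have /eqP W'0 : stencil5 W' q == 0 by rewrite -lap5_eq0 // W'_harm.
have := E'_sub q qS; move: W'0; rewrite /stencil5; lra.
Qed.

Lemma schwarz_iterates_exist S1 S2 (W0 : grid N -> R) : (0 < N)%N ->
  {subset S1 <= @interior N} -> {subset S2 <= @interior N} ->
  exists W : nat -> grid N -> R, W 0%N = W0 /\
    forall k, lap_step S1 (W (2 * k)%N) (W (2 * k + 1)%N) /\
              lap_step S2 (W (2 * k + 1)%N) (W (2 * k + 2)%N).
Proof.
move=> N_gt0 S1_int S2_int.
have [solve1 solve1P] := functional_choice _ (lap_step_exists N_gt0 S1_int).
have [solve2 solve2P] := functional_choice _ (lap_step_exists N_gt0 S2_int).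
exists (fix W j := if j is j'.+1 then (if odd j' then solve2 else solve1) (W j') else W0).
split=> // k; rewrite addn1 addn2 /= oddM /=; split; first exact: solve1P.
exact: solve2P.
Qed.

Lemma schwarz_rate_iter S1 S2 (rho : R) (W : nat -> grid N -> R) :
  0 <= rho -> schwarz_rate S1 S2 rho ->
  (forall p, ~~ interior p -> W 0%N p = 0) ->
  (forall k, lap_step S1 (W (2 * k)%N) (W (2 * k + 1)%N) /\
             lap_step S2 (W (2 * k + 1)%N) (W (2 * k + 2)%N)) ->
  forall k, vmax (W (2 * k)%N) <= rho ^+ k * vmax (W 0%N).
Proof.
move=> rho_ge0 rate W0_bd W_iter; elim=> [|k IH]; first by rewrite muln0 mul1r.
apply: le_trans (rate W W0_bd W_iter k.+1 isT) _.
by rewrite subn1 exprS -mulrA ler_wpM2l.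
Qed.

Lemma vmax_le (Z W : grid N -> R) : (forall s, Z s <= W s) -> vmax Z <= vmax W.
Proof.
move=> Z_le_W; apply/bigmax_leP; split=> [|s _]; apply: le_trans (Z_le_W _) _;
  exact: le_bigmax.
Qed.

Lemma sum_hstep_le_vmax (Z : grid N -> R) : (0 < N)%N -> (forall s, 0 <= Z s) ->
  \sum_s (hstep R N) ^+ 2 * Z s <= 4 * vmax Z.
Proof.
move=> N_gt0 Z_ge0.
have vmax_ge0 : 0 <= vmax Z := le_trans (Z_ge0 (ord0, ord0)) (le_bigmax _ _ _).
apply: le_trans (_ : \sum_(s : grid N) (hstep R N) ^+ 2 * vmax Z <= _).
  by apply: ler_sum => s _; rewrite ler_wpM2l ?sqr_ge0 ?le_bigmax.
rewrite sumr_const card_prod card_ord -[_ *+ _]mulr_natl mulrA ler_wpM2r //.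
rewrite /hstep natrM exprVn ler_pdivrMr ?exprn_gt0 ?ltr0n //.
have : 1 <= N%:R :> R by rewrite ler1n.
rewrite -addn1 natrD; nra.
Qed.

Lemma schwarz_errE_le S1 S2 (alpha : R) (F Yd Y P : grid N -> R)
    (Ys Ps W : nat -> grid N -> R) :
  (0 < N)%N -> 0 < alpha -> {subset S1 <= @interior N} -> {subset S2 <= @interior N} ->
  optsys alpha F Yd Y P ->
  (forall k, opt_step alpha F Yd S1 (Ys (2 * k)%N) (Ps (2 * k)%N)
                                    (Ys (2 * k + 1)%N) (Ps (2 * k + 1)%N) /\
             opt_step alpha F Yd S2 (Ys (2 * k + 1)%N) (Ps (2 * k + 1)%N)
                                    (Ys (2 * k + 2)%N) (Ps (2 * k + 2)%N)) ->
  (forall k, lap_step S1 (W (2 * k)%N) (W (2 * k + 1)%N) /\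
             lap_step S2 (W (2 * k + 1)%N) (W (2 * k + 2)%N)) ->
  (forall p, errE alpha Y P (Ys 0%N) (Ps 0%N) p <= W 0%N p) ->
  forall k p, errE alpha Y P (Ys (2 * k)%N) (Ps (2 * k)%N) p <= W (2 * k)%N p.
Proof.
move=> N_gt0 alpha_gt0 S1_int S2_int optYP Ys_iter W_iter E0_le; elim=> [|k IH].
  by rewrite muln0.
have [step1 step2] := Ys_iter k; have [lap1 lap2] := W_iter k.
have [out1 sub1] := opt_step_errE N_gt0 alpha_gt0 S1_int optYP step1.
have [out2 sub2] := opt_step_errE N_gt0 alpha_gt0 S2_int optYP step2.
rewrite mulnS addnC; apply: (subharmonic_le_lap_step N_gt0 S2_int _ out2 sub2 lap2).
exact: subharmonic_le_lap_step N_gt0 S1_int IH out1 sub1 lap1.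
Qed.
End FivePoint.

Theorem corollary4p1 (R : realType) :
  exists C : R, 0 < C /\
  forall (N : nat) (alpha rho : R) (S1 S2 : {set grid N})
         (F Yd Y P : grid N -> R) (Ys Ps : nat -> grid N -> R),
    (2 <= N)%N -> 0 < alpha -> 0 < rho < 1 ->
    (* Omega = Omega_1 u Omega_2 at the level of interior grid points *)
    (forall p : grid N, (p \in S1 :|: S2) = interior p) ->
    optsys alpha F Yd Y P ->
    (forall p, ~~ interior p -> Ys 0%N p = 0 /\ Ps 0%N p = 0) ->
    (forall k : nat,
       opt_step alpha F Yd S1 (Ys (2 * k)%N) (Ps (2 * k)%N)
                              (Ys (2 * k + 1)%N) (Ps (2 * k + 1)%N) /\
       opt_step alpha F Yd S2 (Ys (2 * k + 1)%N) (Ps (2 * k + 1)%N)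
                              (Ys (2 * k + 2)%N) (Ps (2 * k + 2)%N)) ->
    schwarz_rate S1 S2 rho ->
    forall k : nat, (0 < k)%N ->
      \sum_(s : grid N) (hstep R N) ^+ 2 * errE alpha Y P (Ys (2 * k)%N) (Ps (2 * k)%N) s
        <= C * rho ^+ k * vmax (errE alpha Y P (Ys 0%N) (Ps 0%N)).
Proof.
exists 4; split=> // N alpha rho S1 S2 F Yd Y P Ys Ps N_ge2 alpha_gt0 /andP[rho_gt0 _]
  S12 optYP Ys0_bd Ys_iter rate k _.
have N_gt0 : (0 < N)%N by apply: leq_trans N_ge2.
have S1_int : {subset S1 <= @interior N} by move=> p pS; rewrite -topredE /= -S12 inE pS.
have S2_int : {subset S2 <= @interior N}.
  by move=> p pS; rewrite -topredE /= -S12 inE pS orbT.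
pose E0 := errE alpha Y P (Ys 0%N) (Ps 0%N).
have E0_bd p : ~~ interior p -> E0 p = 0.
  by move=> p_bd; rewrite /E0 /errE; have [-> ->] := Ys0_bd p p_bd;
     have [-> ->] := optYP.2 p p_bd; rewrite !subrr expr0n /= mulr0 addr0.
have [W [W0 W_iter]] := schwarz_iterates_exist E0 N_gt0 S1_int S2_int.
have W0_bd p : ~~ interior p -> W 0%N p = 0 by rewrite W0; exact: E0_bd.
have E0_le_W0 p : E0 p <= W 0%N p by rewrite W0.
have E_le_W := schwarz_errE_le N_gt0 alpha_gt0 S1_int S2_int optYP Ys_iter W_iter E0_le_W0.
apply: le_trans (sum_hstep_le_vmax N_gt0 (errE_ge0 Y P _ _ alpha_gt0)) _.
rewrite -mulrA ler_wpM2l // -/E0 -W0.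
apply: le_trans (schwarz_rate_iter (ltW rho_gt0) rate W0_bd W_iter k).
exact/vmax_le/E_le_W.
Qed.
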